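(* In any generalized-noncontextual ontological model of quantum theory, for each unit vector $\hat n_k\in\mathbb{R}^3$ and $\eta\in[0,1]$, the response function of the $\eta$-sharp spin measurement $\mathcal{M}_k$ given by the qubit POVM $\{E^k_{X_k}=\tfrac12\mathbf{1}+\tfrac{\eta}{2}X_k\vec\sigma\cdot\hat n_k\}_{X_k\in\{+1,-1\}}$ has the form $$p(X_k|\mathcal{M}_k;\lambda)=\eta\,[X_k(\lambda)]+(1-\eta)\big(\tfrac12[+1]+\tfrac12[-1]\big),$$ where $X_k(\lambda)\in\{+1,-1\}$ is the outcome assigned at $\lambda$ to the projective spin measurement along $\hat n_k$, and $[x]$ denotes the deterministic response function assigning probability 1 to outcome $x$.
   Context: An ontological model of quantum theory specifies ontic states $\lambda$, distributions $p(\lambda|P)$ for preparation procedures and response functions $p(X|M;\lambda)$ for measurement procedures reproducing the quantum statistics. It is measurement-noncontextual if operationally equivalent measurement procedures (same POVM) have identical response functions, preparation-noncontextual if operationally equivalent preparation procedures (same density operator) have identical distributions, and generalized-noncontextual if it is both. $\vec\sigma$ denotes the vector of Pauli matrices. *)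

From HB Require Import structures.
From mathcomp Require Import all_boot all_order all_algebra.
From mathcomp Require Import all_classical all_reals all_analysis.
From mathcomp.real_closed Require Import complex.

Set Implicit Arguments.
Unset Strict Implicit.
Unset Printing Implicit Defensive.

Import Order.TTheory GRing.Theory Num.Theory.
Local Open Scope ring_scope.
Local Open Scope classical_set_scope.
Local Open Scope complex_scope.
Local Open Scope ring_scope.

Section Qubit.
Variable R : realType.
Local Notation C := (R[i]).

Definition adjmx m n (A : 'M[C]_(m, n)) : 'M[C]_(n, m) := \matrix_(i, j) (A j i)^*.

Definition psd (A : 'M[C]_2) : Prop :=
  adjmx A = A /\ forall v : 'cV[C]_2, 0 <= ((adjmx v) *m A *m v) 0 0.

Definition is_density (rho : 'M[C]_2) : Prop := psd rho /\ \tr rho = 1.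
Definition is_effect (E : 'M[C]_2) : Prop := psd E /\ psd (1 - E).

Definition density := {rho : 'M[C]_2 | is_density rho}.
Definition effect := {E : 'M[C]_2 | is_effect E}.
Definition weight := {p : R | 0 <= p <= 1}.

(* Born rule probability tr(rho E) (real part; it is real for psd operators) *)
Definition born (rho E : 'M[C]_2) : R := complex.Re (\tr (rho *m E)).

Definition sigma_x : 'M[C]_2 := \matrix_(i, j) (if i == j then 0 else 1).
Definition sigma_y : 'M[C]_2 :=
  \matrix_(i, j) (if i == j then 0 else if (i : nat) == 0%N then - 'i%C else 'i%C).
Definition sigma_z : 'M[C]_2 :=
  \matrix_(i, j) (if i == j then (if (i : nat) == 0%N then 1 else -1) else 0).

Definition sigma_dot (n : 'rV[R]_3) : 'M[C]_2 :=
  (n 0 0)%:C *: sigma_x + (n 0 1)%:C *: sigma_y + (n 0 2%:R)%:C *: sigma_z.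

Definition unit_vector (n : 'rV[R]_3) : Prop := \sum_(i < 3) n 0 i ^+ 2 = 1.

(* Outcome +1 is encoded by [true], outcome -1 by [false]. *)
Definition outcome_sign (x : bool) : R := if x then 1 else -1.

Definition eta_spin_effect (eta : R) (n : 'rV[R]_3) (x : bool) : 'M[C]_2 :=
  (2^-1)%:C *: 1 + (eta / 2 * outcome_sign x)%:C *: sigma_dot n.

(* Operational theory of (binary-outcome) qubit quantum theory: procedures
   generated from primitive procedures (any density operator / any binary
   POVM {E, 1-E}, each with arbitrarily many distinct implementations
   labelled by a tag) by convex mixing, and for measurements also by
   deterministic relabelling (classical post-processing) of outcomes. *)
Inductive prep :=
  | PBasic of density & nat
  | PMix of weight & prep & prep.

Inductive meas :=
  | MBasic of effect & nat
  | MMix of weight & meas & meas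
  | MRelabel of (bool -> bool) & meas.

Fixpoint dens (P : prep) : 'M[C]_2 :=
  match P with
  | PBasic rho _ => sval rho
  | PMix p P1 P2 => (sval p)%:C *: dens P1 + (1 - sval p)%:C *: dens P2
  end.

Fixpoint povm (M : meas) (x : bool) : 'M[C]_2 :=
  match M with
  | MBasic E _ => if x then sval E else 1 - sval E
  | MMix p M1 M2 => (sval p)%:C *: povm M1 x + (1 - sval p)%:C *: povm M2 x
  | MRelabel f M1 => \sum_(y : bool | f y == x) povm M1 y
  end.

Record ontological_model := OntModel {
  ont_disp : measure_display;
  ontic : measurableType ont_disp;
  mu : prep -> probability ontic R;
  xi : meas -> bool -> ontic -> R;
  xi_measurable : forall M x, measurable_fun setT (xi M x);
  xi_ge0 : forall M x l, 0 <= xi M x l;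
  xi_sum1 : forall M l, xi M true l + xi M false l = 1;
  mu_mix : forall p P1 P2 A, measurable A ->
    mu (PMix p P1 P2) A = ((sval p)%:E * mu P1 A + (1 - sval p)%:E * mu P2 A)%E;
  xi_mix : forall p M1 M2 x l,
    xi (MMix p M1 M2) x l = sval p * xi M1 x l + (1 - sval p) * xi M2 x l;
  xi_relabel : forall f M x l,
    xi (MRelabel f M) x l = \sum_(y : bool | f y == x) xi M y l;
  reproduces : forall P M x,
    (\int[mu P]_l (xi M x l)%:E)%E = (born (dens P) (povm M x))%:E
}.


Definition meas_noncontextual (m : ontological_model) : Prop :=
  forall M M', (forall x, povm M x = povm M' x) -> @xi m M = @xi m M'.

Definition prep_noncontextual (m : ontological_model) : Prop :=
  forall P P', dens P = dens P' -> @mu m P = @mu m P'.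

Definition generalized_noncontextual (m : ontological_model) : Prop :=
  meas_noncontextual m /\ prep_noncontextual m.

Definition det_resp (x : bool) (y : bool) : R := if y == x then 1 else 0.

End Qubit.

Arguments xi {R} o M x l.
Arguments mu {R} o P.
Arguments det_resp {R} x y.

From HB Require Import structures.
From mathcomp Require Import all_boot all_order all_algebra.
From mathcomp Require Import all_classical all_reals all_analysis.
From mathcomp.real_closed Require Import complex.
From mathcomp Require Import ring lra measurable_realfun.

Set Implicit Arguments.
Unset Strict Implicit.
Unset Printing Implicit Defensive.
Import Order.TTheory GRing.Theory Num.Theory.
Local Open Scope ring_scope.
Local Open Scope classical_set_scope.
Local Open Scope complex_scope.

(* Measurement noncontextuality makes response functions affine in the POVM.
   The eta-sharp spin effect is the eta-mixture of the projective one with the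
   trivial effect 1/2, whose response is 1/2 because relabelling its outcomes
   does not change it; this gives the unsharp response.  Preparation
   noncontextuality makes every state absolutely continuous with respect to the
   maximally mixed state 1/2, since mixing rho evenly with 1 - rho gives 1/2.
   But 1/2 is also the even mixture of the two spin eigenstates, each of which
   assigns probability 0 to the opposite outcome; so almost surely under 1/2,
   hence under every preparation, one of the two projective responses
   vanishes, i.e. the projective measurement is outcome deterministic. *)

Section HermitianForm.
Variable R : realFieldType.

Definition herm2_form (a d b1 b2 x1 x2 y1 y2 : R) : R :=
  a * (x1 ^+ 2 + x2 ^+ 2) + d * (y1 ^+ 2 + y2 ^+ 2)
  + 2 * (b1 * (x1 * y1 + x2 * y2) - b2 * (x1 * y2 - x2 * y1)).

Lemma herm2_form_ge0 (a d b1 b2 x1 x2 y1 y2 : R) :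
  0 <= a -> 0 <= d -> b1 ^+ 2 + b2 ^+ 2 <= a * d ->
  0 <= herm2_form a d b1 b2 x1 x2 y1 y2.
Proof.
move=> a_ge0 d_ge0 hb.
have aQ : a * herm2_form a d b1 b2 x1 x2 y1 y2 =
    (a * x1 + b1 * y1 - b2 * y2) ^+ 2 + (a * x2 + b1 * y2 + b2 * y1) ^+ 2
    + (a * d - (b1 ^+ 2 + b2 ^+ 2)) * (y1 ^+ 2 + y2 ^+ 2).
  by rewrite /herm2_form; ring.
have [a0|a_neq0] := eqVneq a 0.
  have [-> ->] : b1 = 0 /\ b2 = 0 by split; nra.
  by rewrite /herm2_form a0; nra.
have : 0 <= a * herm2_form a d b1 b2 x1 x2 y1 y2.
  rewrite aQ addr_ge0 ?addr_ge0 ?sqr_ge0 // mulr_ge0 ?subr_ge0 //.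
  by rewrite addr_ge0 ?sqr_ge0.
by rewrite pmulr_rge0 // lt0r a_neq0.
Qed.

Lemma herm2_form_ge0P (a d b1 b2 : R) :
  (forall x1 x2 y1 y2, 0 <= herm2_form a d b1 b2 x1 x2 y1 y2) <->
  [/\ 0 <= a, 0 <= d & b1 ^+ 2 + b2 ^+ 2 <= a * d].
Proof.
split=> [Q_ge0|[a_ge0 d_ge0 hb] *]; last exact: herm2_form_ge0.
set b := b1 ^+ 2 + b2 ^+ 2.
have b_ge0 : 0 <= b by rewrite addr_ge0 ?sqr_ge0.
have a_ge0 : 0 <= a by have := Q_ge0 1 0 0 0; rewrite /herm2_form; lra.
have d_ge0 : 0 <= d by have := Q_ge0 0 0 1 0; rewrite /herm2_form; lra.
split=> //.
have [ad0|ad_neq0] := eqVneq (a + d) 0.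
  have [a0 d0] : a = 0 /\ d = 0 by split; lra.
  have := Q_ge0 1 0 (- b1) b2; rewrite /herm2_form a0 d0 /b; nra.
(* The test vectors (d, -conj b) and (-b, a) give d (ad - |b|^2) >= 0 and
   a (ad - |b|^2) >= 0. *)
have hd := Q_ge0 d 0 (- b1) b2.
have ha := Q_ge0 (- b1) (- b2) a 0.
have : 0 <= (a + d) * (a * d - b).
  by move: hd ha; rewrite /herm2_form /b; nra.
by rewrite pmulr_rge0 ?subr_ge0 // lt0r ad_neq0 addr_ge0.
Qed.

End HermitianForm.

Section QubitMatrices.
Variable R : realType.
Local Notation C := R[i].
Local Notation Re := (@complex.Re R).
Local Notation Im := (@complex.Im R).

Lemma ord2P (i : 'I_2) : i = 0 \/ i = 1.
Proof. by case: i => [[|[|k]] Hi]; [left; apply: val_inj|right; apply: val_inj|]. Qed.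

Lemma sum_ord2 (V : nmodType) (F : 'I_2 -> V) : \sum_(i < 2) F i = F 0 + F 1.
Proof. by rewrite big_ord_recl big_ord1; congr (_ + F _); apply: val_inj. Qed.

Definition herm2 (a d b1 b2 : R) : 'M[C]_2 :=
  \matrix_(i, j) if i == j then (if (i : nat) == 0%N then a%:C else d%:C)
                 else if (i : nat) == 0%N then b1 +i* b2 else b1 -i* b2.

Lemma matrix2P (A B : 'M[C]_2) :
  A 0 0 = B 0 0 -> A 0 1 = B 0 1 -> A 1 0 = B 1 0 -> A 1 1 = B 1 1 -> A = B.
Proof.
move=> h00 h01 h10 h11; apply/matrixP => i j.
by case: (ord2P i) => ->; case: (ord2P j) => ->.
Qed.

Lemma conjcE (x : C) : x^*%R = x^*%C. Proof. by []. Qed.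

Ltac herm2_entries := apply: matrix2P; rewrite !mxE ?conjcE /=; simpc.

Lemma herm2D (a d b1 b2 a' d' c1 c2 : R) :
  herm2 a d b1 b2 + herm2 a' d' c1 c2 = herm2 (a + a') (d + d') (b1 + c1) (b2 + c2).
Proof. by herm2_entries; congr (_ +i* _); ring. Qed.

Lemma herm2Z (p a d b1 b2 : R) :
  p%:C *: herm2 a d b1 b2 = herm2 (p * a) (p * d) (p * b1) (p * b2).
Proof. by herm2_entries; congr (_ +i* _); ring. Qed.

Lemma herm2B (a d b1 b2 a' d' c1 c2 : R) :
  herm2 a d b1 b2 - herm2 a' d' c1 c2 = herm2 (a - a') (d - d') (b1 - c1) (b2 - c2).
Proof. by herm2_entries; congr (_ +i* _); ring. Qed.

Lemma herm2_1 : 1 = herm2 1 1 0 0.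
Proof. by herm2_entries. Qed.

Lemma adjmx_herm2 (a d b1 b2 : R) : adjmx (herm2 a d b1 b2) = herm2 a d b1 b2.
Proof. by herm2_entries. Qed.

Lemma hermitian_herm2 (A : 'M[C]_2) : adjmx A = A ->
  A = herm2 (Re (A 0 0)) (Re (A 1 1)) (Re (A 0 1)) (Im (A 0 1)).
Proof.
move=> hA; have Aji i j : A i j = (A j i)^*%C by rewrite -[in LHS]hA mxE.
have real_diag i : A i i = (Re (A i i))%:C.
  by move: (Aji i i); case: (A i i) => a a' /= [h]; rewrite (_ : a' = 0) //; lra.
apply: matrix2P; rewrite !mxE /=; try exact: real_diag; first by case: (A 0 1).
by rewrite (Aji 1 0); case: (A 0 1).
Qed.

Lemma mxtrace_herm2 (a d b1 b2 : R) : \tr (herm2 a d b1 b2) = (a + d)%:C.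
Proof. by rewrite /mxtrace sum_ord2 !mxE /= rmorphD. Qed.

Lemma born_herm2 (a d b1 b2 a' d' c1 c2 : R) :
  born (herm2 a d b1 b2) (herm2 a' d' c1 c2) =
  a * a' + d * d' + 2 * (b1 * c1 + b2 * c2).
Proof. rewrite /born /mxtrace sum_ord2 !mxE !sum_ord2 !mxE /=; ring. Qed.

Lemma herm2_quadE (a d b1 b2 : R) (v : 'cV[C]_2) :
  (adjmx v *m herm2 a d b1 b2 *m v) 0 0 =
  (herm2_form a d b1 b2 (Re (v 0 0)) (Im (v 0 0)) (Re (v 1 0)) (Im (v 1 0)))%:C.
Proof.
rewrite !mxE !sum_ord2 !mxE !sum_ord2 !mxE /=.
case: (v 0 0) => x1 x2; case: (v 1 0) => y1 y2 /=; simpc.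
by rewrite /herm2_form; congr (_ +i* _); ring.
Qed.

Lemma psd_herm2P (a d b1 b2 : R) :
  psd (herm2 a d b1 b2) <-> [/\ 0 <= a, 0 <= d & b1 ^+ 2 + b2 ^+ 2 <= a * d].
Proof.
rewrite -herm2_form_ge0P; split=> [[_ Q_ge0] x1 x2 y1 y2|Q_ge0].
  pose v : 'cV[C]_2 := \col_i (if (i : nat) == 0%N then x1 +i* x2 else y1 +i* y2).
  by have := Q_ge0 v; rewrite herm2_quadE !mxE /= ler0c.
by split=> [|v]; rewrite ?adjmx_herm2 // herm2_quadE ler0c.
Qed.

Lemma is_density_herm2 (a d b1 b2 : R) : is_density (herm2 a d b1 b2) <->
  [/\ 0 <= a, 0 <= d & b1 ^+ 2 + b2 ^+ 2 <= a * d] /\ a + d = 1.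
Proof. by rewrite /is_density psd_herm2P mxtrace_herm2; split=> [[? [->]]|[? ->]]. Qed.

Lemma density_herm2 (rho : 'M[C]_2) :
  is_density rho -> exists a d b1 b2, rho = herm2 a d b1 b2.
Proof. by case=> -[/hermitian_herm2 ->]; do 4 eexists. Qed.

Lemma is_density_mix (p : R) (rho sigma : 'M[C]_2) : 0 <= p <= 1 ->
  is_density rho -> is_density sigma -> is_density (p%:C *: rho + (1 - p)%:C *: sigma).
Proof.
move=> /andP[p_ge0 p_le1].
move=> /[dup] /density_herm2 [a [d [b1 [b2 ->]]]].
move=> /is_density_herm2 [/herm2_form_ge0P Q_ge0 ad1].
move=> /[dup] /density_herm2 [a' [d' [c1 [c2 ->]]]].
move=> /is_density_herm2 [/herm2_form_ge0P Q'_ge0 ad1'].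
rewrite !herm2Z herm2D is_density_herm2 -herm2_form_ge0P; split; last by nra.
move=> x1 x2 y1 y2.
have -> : herm2_form (p * a + (1 - p) * a') (p * d + (1 - p) * d')
    (p * b1 + (1 - p) * c1) (p * b2 + (1 - p) * c2) x1 x2 y1 y2 =
    p * herm2_form a d b1 b2 x1 x2 y1 y2 + (1 - p) * herm2_form a' d' c1 c2 x1 x2 y1 y2.
  by rewrite /herm2_form; ring.
by rewrite addr_ge0 // mulr_ge0 ?subr_ge0.
Qed.

Lemma is_density_oneB (rho : 'M[C]_2) : is_density rho -> is_density (1 - rho).
Proof.
move=> /[dup] /density_herm2 [a [d [b1 [b2 ->]]]].
move=> /is_density_herm2 [[a_ge0 d_ge0 hb] ad1].
rewrite herm2_1 herm2B is_density_herm2 !sub0r !sqrrN; split; [split|]; nra.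
Qed.

Lemma sigma_dotE (n : 'rV[R]_3) :
  sigma_dot n = herm2 (n 0 2%:R) (- n 0 2%:R) (n 0 0) (- n 0 1).
Proof. by herm2_entries; congr (_ +i* _); ring. Qed.

Definition maxmixed : 'M[C]_2 := (2^-1)%:C *: 1.

Lemma maxmixedE : maxmixed = herm2 2^-1 2^-1 0 0.
Proof. by rewrite /maxmixed herm2_1 herm2Z mulr1 mulr0. Qed.

Lemma oneB_maxmixed : 1 - maxmixed = maxmixed.
Proof. by rewrite maxmixedE herm2_1 herm2B !subr0; congr herm2; lra. Qed.

Lemma is_effect_maxmixed : is_effect maxmixed.
Proof.
have half_ge0 : 0 <= 2^-1 :> R by lra.
by rewrite /is_effect oneB_maxmixed maxmixedE psd_herm2P expr0n addr0 mulr_ge0.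
Qed.

Lemma complement_mix (A : 'M[C]_2) :
  (2^-1)%:C *: A + (1 - 2^-1)%:C *: (1 - A) = maxmixed.
Proof.
have -> : 1 - 2^-1 = 2^-1 :> R by lra.
by rewrite -scalerDr [A + _]addrC subrK.
Qed.

Lemma sqr_outcome_sign (x : bool) : outcome_sign R x ^+ 2 = 1.
Proof. by case: x; rewrite /outcome_sign ?sqrrN expr1n. Qed.

Lemma outcome_sign_negb (x : bool) : outcome_sign R (~~ x) = - outcome_sign R x.
Proof. by case: x; rewrite /outcome_sign ?opprK. Qed.

Lemma unit_vectorE (n : 'rV[R]_3) : unit_vector n ->
  n 0 0 ^+ 2 + n 0 1 ^+ 2 + n 0 2%:R ^+ 2 = 1.
Proof.
rewrite /unit_vector !big_ord_recr big_ord0 /= add0r => <-.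
by congr (n 0 _ ^+ 2 + n 0 _ ^+ 2 + n 0 _ ^+ 2); apply: val_inj.
Qed.

Lemma eta_spin_effectE (eta : R) (n : 'rV[R]_3) (x : bool) :
  let c := eta / 2 * outcome_sign R x in
  eta_spin_effect eta n x =
  herm2 (2^-1 + c * n 0 2%:R) (2^-1 - c * n 0 2%:R) (c * n 0 0) (- (c * n 0 1)).
Proof.
by rewrite /eta_spin_effect sigma_dotE herm2_1 !herm2Z herm2D; congr herm2; ring.
Qed.

Lemma eta_spin_effect_mix (eta : R) (n : 'rV[R]_3) (x : bool) :
  eta_spin_effect eta n x = eta%:C *: eta_spin_effect 1 n x + (1 - eta)%:C *: maxmixed.
Proof.
by rewrite !eta_spin_effectE maxmixedE !herm2Z herm2D; congr herm2; ring.
Qed.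

Lemma spin_projectors_mix (n : 'rV[R]_3) :
  (2^-1)%:C *: eta_spin_effect 1 n true + (1 - 2^-1)%:C *: eta_spin_effect 1 n false
  = maxmixed.
Proof.
by rewrite !eta_spin_effectE maxmixedE !herm2Z herm2D /outcome_sign; congr herm2; lra.
Qed.

Lemma is_density_spin_projector (n : 'rV[R]_3) (x : bool) :
  unit_vector n -> is_density (eta_spin_effect 1 n x).
Proof.
move=> /unit_vectorE hn; have := sqr_outcome_sign x.
rewrite eta_spin_effectE is_density_herm2; set s := outcome_sign R x => s2.
by split; [split|]; nra.
Qed.

Lemma born_spin_projector_negb (n : 'rV[R]_3) (x : bool) : unit_vector n ->
  born (eta_spin_effect 1 n x) (eta_spin_effect 1 n (~~ x)) = 0.
Proof.
move=> /unit_vectorE hn; have := sqr_outcome_sign x.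
rewrite !eta_spin_effectE born_herm2 outcome_sign_negb.
set s := outcome_sign R x => s2; nra.
Qed.

Lemma is_density_dens (P : prep R) : is_density (dens P).
Proof.
elim: P => [rho _|p P1 h1 P2 h2] /=; first exact: svalP.
exact: is_density_mix (svalP p) h1 h2.
Qed.

End QubitMatrices.

Lemma sum_negb_eq (V : nmodType) (F : bool -> V) (y : bool) :
  \sum_(z : bool | ~~ z == y) F z = F (~~ y).
Proof. by case: y; rewrite big_mkcond big_bool /= ?addr0 ?add0r. Qed.

Lemma det_resp_of_sharp (R : realType) (r : bool -> R) :
  r true + r false = 1 -> r true = 0 \/ r false = 0 ->
  forall x, r x = det_resp (r true != 0) x.
Proof.
move=> r1 [r0|r0] x; rewrite /det_resp.
  by rewrite r0 eqxx /=; case: x => /=; lra.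
by rewrite (_ : r true = 1) ?oner_eq0 /=; [case: x => /=; lra | lra].
Qed.

Lemma det_resp_uniform (R : realType) (x : bool) :
  2^-1 * det_resp true x + 2^-1 * det_resp false x = 2^-1 :> R.
Proof. by case: x; rewrite /det_resp /= ?mulr1 ?mulr0 ?addr0 ?add0r. Qed.

Section NoncontextualModel.
Variables (R : realType) (m : ontological_model R).

Fact half_in_unit : 0 <= (2^-1 : R) <= 1.
Proof. by apply/andP; split; lra. Qed.

Definition half_weight : weight R := exist _ 2^-1 half_in_unit.

Lemma xi_povm_mix (p : weight R) (M M1 M2 : meas R) : meas_noncontextual m ->
  (forall x, povm M x = (sval p)%:C *: povm M1 x + (1 - sval p)%:C *: povm M2 x) ->
  forall x l, xi m M x l = sval p * xi m M1 x l + (1 - sval p) * xi m M2 x l.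
Proof. by move=> mNC hM x l; rewrite (mNC M (MMix p M1 M2) hM) xi_mix. Qed.

Lemma xi_symmetric_povm (M : meas R) : meas_noncontextual m ->
  povm M true = povm M false -> forall x l, xi m M x l = 2^-1.
Proof.
move=> mNC hM x l.
have xi_swap : xi m (MRelabel negb M) = xi m M.
  by apply: mNC => y; rewrite /= sum_negb_eq; case: y.
have := congr1 (fun f => f true l) xi_swap; rewrite xi_relabel sum_negb_eq /=.
by have := @xi_sum1 _ m M l; case: x; lra.
Qed.

Lemma ae_xi_eq0 (P : prep R) (M : meas R) (x : bool) :
  born (dens P) (povm M x) = 0 -> {ae mu m P, forall l, xi m M x l = 0}.
Proof.
move=> born0.
have mxi : measurable_fun setT (fun l => (xi m M x l)%:E).
  exact/measurable_EFinP/xi_measurable.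
have : (\int[mu m P]_l `|(xi m M x l)%:E|)%E = 0%E.
  have -> : (fun l => `|(xi m M x l)%:E|%E) = (fun l => (xi m M x l)%:E).
    by apply: funext => l; rewrite gee0_abs // lee_fin xi_ge0.
  by rewrite reproduces born0.
move/(ae_eq_integral_abs _ measurableT mxi); apply: filterS => l /(_ I).
by case.
Qed.

Lemma ae_mix (p : weight R) (P1 P2 : prep R) (Q : ontic m -> Prop) :
  {ae mu m P1, forall l, Q l} -> {ae mu m P2, forall l, Q l} ->
  {ae mu m (PMix p P1 P2), forall l, Q l}.
Proof.
move=> [N1 [mN1 N1_0 sN1]] [N2 [mN2 N2_0 sN2]].
have mN : measurable (N1 `&` N2) by exact: measurableI.
exists (N1 `&` N2); split => //; last by move=> l nQl; split; [apply: sN1|apply: sN2].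
rewrite mu_mix // (subset_measure0 mN mN1 (@subIsetl _ _ _) N1_0).
by rewrite (subset_measure0 mN mN2 (@subIsetr _ _ _) N2_0) !mule0 adde0.
Qed.

Lemma ae_mixl (p : weight R) (P1 P2 : prep R) (Q : ontic m -> Prop) : 0 < sval p ->
  {ae mu m (PMix p P1 P2), forall l, Q l} -> {ae mu m P1, forall l, Q l}.
Proof.
move=> p_gt0 [N [mN N0 sN]]; exists N; split => //.
have /andP[_ p_le1] := svalP p.
move: N0; rewrite mu_mix // => /eqP.
rewrite padde_eq0 ?mule_ge0 ?lee_fin ?subr_ge0 ?measure_ge0 ?(ltW p_gt0) //.
by case/andP; rewrite mule_eq0 eqe gt_eqF //= => /eqP.
Qed.

Lemma ae_maxmixed (P0 : prep R) (Q : ontic m -> Prop) : prep_noncontextual m ->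
  dens P0 = maxmixed R -> {ae mu m P0, forall l, Q l} ->
  forall P, {ae mu m P, forall l, Q l}.
Proof.
move=> pNC hP0 hQ P.
pose Pc := PBasic (exist _ (1 - dens P) (is_density_oneB (is_density_dens P))) 0.
apply: (@ae_mixl half_weight P Pc) => /=; first lra.
by rewrite (pNC _ P0) //= complement_mix.
Qed.

Variables (n : 'rV[R]_3) (eta : R) (Mk Mproj : meas R).
Hypothesis hMproj : forall x, povm Mproj x = eta_spin_effect 1 n x.

Lemma xi_unsharp_spin (heta : 0 <= eta <= 1) :
  meas_noncontextual m -> (forall x, povm Mk x = eta_spin_effect eta n x) ->
  forall x l, xi m Mk x l = eta * xi m Mproj x l + (1 - eta) * 2^-1.
Proof.
move=> mNC hMk x l.
pose T := MBasic (exist _ (maxmixed R) (is_effect_maxmixed R)) 0.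
have xiT y l' : xi m T y l' = 2^-1.
  by apply: xi_symmetric_povm => //=; rewrite oneB_maxmixed.
rewrite (@xi_povm_mix (exist _ eta heta) Mk Mproj T) ?xiT // => y.
by rewrite hMk hMproj eta_spin_effect_mix /=; case: y; rewrite ?oneB_maxmixed.
Qed.

Lemma ae_projective_spin_sharp : prep_noncontextual m -> unit_vector n ->
  forall P, {ae mu m P, forall l, xi m Mproj true l = 0 \/ xi m Mproj false l = 0}.
Proof.
move=> pNC hn.
pose Pspin x :=
  PBasic (exist _ (eta_spin_effect 1 n x) (is_density_spin_projector x hn)) 0.
have null x : {ae mu m (Pspin x), forall l, xi m Mproj (~~ x) l = 0}.
  by apply: ae_xi_eq0; rewrite hMproj born_spin_projector_negb.
apply: (@ae_maxmixed (PMix half_weight (Pspin true) (Pspin false))) => //=.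
  exact: spin_projectors_mix.
by apply: ae_mix; apply: filterS (null _) => l; [right|left].
Qed.

End NoncontextualModel.

Theorem lemma2 (R : realType) (m : ontological_model R)
  (hNC : generalized_noncontextual m)
  (n : 'rV[R]_3) (hn : unit_vector n) (eta : R) (heta : 0 <= eta <= 1)
  (Mk : meas R) (hMk : forall x, povm Mk x = eta_spin_effect eta n x)
  (Mproj : meas R) (hMproj : forall x, povm Mproj x = eta_spin_effect 1 n x) :
  exists X : ontic m -> bool,
    forall P : prep R,
      {ae mu m P, forall l,
         (forall x, xi m Mproj x l = det_resp (X l) x) /\
         (forall x, xi m Mk x l =
            eta * det_resp (X l) x
            + (1 - eta) * (2^-1 * det_resp true x + 2^-1 * det_resp false x))}.
Proof.
case: hNC => mNC pNC.
exists (fun l => xi m Mproj true l != 0) => P.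
apply: filterS (ae_projective_spin_sharp hMproj pNC hn P) => l sharp.
have proj_det := @det_resp_of_sharp _ (xi m Mproj ^~ l) (@xi_sum1 _ m Mproj l) sharp.
split=> // x.
by rewrite (xi_unsharp_spin hMproj heta mNC hMk) proj_det det_resp_uniform.
Qed.
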